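(* For any consistent set $T$ of explicit literals and any nested expression $F$: $T\models F$ iff $T\models F^T$; and $T=\!\!|\;F$ iff $T=\!\!|\;F^T$.
   Context: Fix a set $\mathit{At}$ of atoms. An explicit literal is $p$ or $\sim p$ for $p\in\mathit{At}$; a set of explicit literals is consistent if it never contains both $p$ and $\sim p$. Nested expressions: $F ::= \top\mid\bot\mid p\mid F\vee F\mid F\wedge F\mid\neg F\mid\sim F$. Satisfaction/falsification by a consistent set $T$: $T\models\top$, $T$ does not falsify $\top$; $T\not\models\bot$, $T=\!\!|\;\bot$; $T\models p$ iff $p\in T$, $T=\!\!|\;p$ iff $\sim p\in T$; $T\models\varphi\wedge\psi$ iff both, $T=\!\!|\;\varphi\wedge\psi$ iff at least one falsified; $T\models\varphi\vee\psi$ iff at least one, $T=\!\!|\;\varphi\vee\psi$ iff both falsified; $T\models\sim\varphi$ iff $T=\!\!|\;\varphi$, $T=\!\!|\;\sim\varphi$ iff $T\models\varphi$; $T\models\neg\varphi$ iff $T\not\models\varphi$, $T=\!\!|\;\neg\varphi$ iff $T\models\varphi$. Reduct: $\top^T=\top$, $\bot^T=\bot$, $p^T=p$, $(F\wedge G)^T=F^T\wedge G^T$, $(F\vee G)^T=F^T\vee G^T$, $(\sim F)^T=\sim(F^T)$, $(\neg F)^T=\bot$ if $T\models F$ and $\top$ otherwise. *)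

Inductive lit (At : Type) : Type :=
| Pos : At -> lit At
| Neg : At -> lit At.
Arguments Pos {At} _.
Arguments Neg {At} _.

Definition litset (At : Type) := lit At -> Prop.

Definition consistent {At : Type} (T : litset At) : Prop :=
  forall p : At, ~ (T (Pos p) /\ T (Neg p)).

Inductive nexp (At : Type) : Type :=
| NTop : nexp At
| NBot : nexp At
| NAtom : At -> nexp At
| NOr : nexp At -> nexp At -> nexp At
| NAnd : nexp At -> nexp At -> nexp At
| NNot : nexp At -> nexp At      (* default negation  ¬ *)
| NSNeg : nexp At -> nexp At.    (* strong negation   ∼ *)
Arguments NTop {At}.
Arguments NBot {At}.
Arguments NAtom {At} _.
Arguments NOr {At} _ _.
Arguments NAnd {At} _ _.
Arguments NNot {At} _.
Arguments NSNeg {At} _.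

(* sat T F : T |= F ;  fals T F : T =| F (mutually defined, returned as a pair). *)
Fixpoint satfals {At : Type} (T : litset At) (F : nexp At) : Prop * Prop :=
  match F with
  | NTop => (True, False)
  | NBot => (False, True)
  | NAtom p => (T (Pos p), T (Neg p))
  | NAnd G H => let (sG, fG) := satfals T G in let (sH, fH) := satfals T H in
                (sG /\ sH, fG \/ fH)
  | NOr G H => let (sG, fG) := satfals T G in let (sH, fH) := satfals T H in
               (sG \/ sH, fG /\ fH)
  | NSNeg G => let (sG, fG) := satfals T G in (fG, sG)
  | NNot G => let (sG, _) := satfals T G in (~ sG, sG)
  end.

Definition sat {At : Type} (T : litset At) (F : nexp At) : Prop := fst (satfals T F).
Definition fals {At : Type} (T : litset At) (F : nexp At) : Prop := snd (satfals T F).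

(* Reduct F^T.  Satisfaction of F by T is a Prop (T is an arbitrary set), so the
   case split "bot if T |= F, top otherwise" uses classical excluded middle. *)
From Stdlib Require Import Classical ClassicalEpsilon.

Definition sat_dec {At : Type} (T : litset At) (F : nexp At) : {sat T F} + {~ sat T F} :=
  excluded_middle_informative (sat T F).

Fixpoint reduct {At : Type} (T : litset At) (F : nexp At) : nexp At :=
  match F with
  | NTop => NTop
  | NBot => NBot
  | NAtom p => NAtom p
  | NAnd G H => NAnd (reduct T G) (reduct T H)
  | NOr G H => NOr (reduct T G) (reduct T H)
  | NSNeg G => NSNeg (reduct T G)
  | NNot G => if sat_dec T G then NBot else NTop
  end.

(* Only the negation clause of the reduct depends on T, and it replaces ¬G by the
   constant whose satisfaction and falsification by T agree with those of ¬G;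
   every other clause commutes with satisfaction and falsification. *)

Section Reduct.

Variables (At : Type) (T : litset At).

Lemma satfals_eta (F : nexp At) : satfals T F = (sat T F, fals T F).
Proof. unfold sat, fals; now destruct (satfals T F). Qed.

Lemma sat_and (G H : nexp At) : sat T (NAnd G H) <-> sat T G /\ sat T H.
Proof. unfold sat at 1; simpl; now rewrite !satfals_eta. Qed.

Lemma fals_and (G H : nexp At) : fals T (NAnd G H) <-> fals T G \/ fals T H.
Proof. unfold fals at 1; simpl; now rewrite !satfals_eta. Qed.

Lemma sat_or (G H : nexp At) : sat T (NOr G H) <-> sat T G \/ sat T H.
Proof. unfold sat at 1; simpl; now rewrite !satfals_eta. Qed.

Lemma fals_or (G H : nexp At) : fals T (NOr G H) <-> fals T G /\ fals T H.
Proof. unfold fals at 1; simpl; now rewrite !satfals_eta. Qed.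

Lemma sat_sneg (G : nexp At) : sat T (NSNeg G) <-> fals T G.
Proof. unfold sat at 1; simpl; now rewrite !satfals_eta. Qed.

Lemma fals_sneg (G : nexp At) : fals T (NSNeg G) <-> sat T G.
Proof. unfold fals at 1; simpl; now rewrite !satfals_eta. Qed.

Lemma sat_not (G : nexp At) : sat T (NNot G) <-> ~ sat T G.
Proof. unfold sat at 1; simpl; now rewrite !satfals_eta. Qed.

Lemma fals_not (G : nexp At) : fals T (NNot G) <-> sat T G.
Proof. unfold fals at 1; simpl; now rewrite !satfals_eta. Qed.

Lemma sat_fals_reduct (F : nexp At) :
  (sat T F <-> sat T (reduct T F)) /\ (fals T F <-> fals T (reduct T F)).
Proof.
  induction F as [| |p|G IG H IH|G IG H IH|G IG|G IG]; simpl reduct.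
  - tauto.
  - tauto.
  - tauto.
  - rewrite !sat_or, !fals_or; tauto.
  - rewrite !sat_and, !fals_and; tauto.
  - rewrite sat_not, fals_not.
    destruct (sat_dec T G); cbv [sat fals satfals fst snd]; tauto.
  - rewrite !sat_sneg, !fals_sneg; tauto.
Qed.

End Reduct.

Theorem proposition1 (At : Type) (T : litset At) (HT : consistent T) (F : nexp At) :
  (sat T F <-> sat T (reduct T F)) /\ (fals T F <-> fals T (reduct T F)).
Proof. apply sat_fals_reduct. Qed.
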